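(* Let $p>1$ be an integer. Then the point spectrum of $U_p$ on $\mathcal{R}$, i.e. the set of $\lambda\in\mathbb{R}$ for which there is a nonzero $f\in\mathcal{R}$ with $U_pf=\lambda f$, is \[\operatorname{spec}(U_p)=\{\pm p^{k}\,:\,k\in\mathbb{N}\}\cup\{0\},\] where $\mathbb{N}=\{0,1,2,\dots\}$.
   Context: $\mathcal{R}$ denotes the real vector space of rational functions $f(x)=A(x)/B(x)$ with $A,B\in\mathbb{R}[x]$, $B(0)\neq 0$ and $\deg A<\deg B$. For $f\in\mathcal{R}$ with Taylor expansion $f(x)=\sum_{n\ge0}a_nx^n$ at $0$ and a positive integer $p$, the Hecke operator $U_p$ is defined by $U_pf(x)=\sum_{n\ge 0}a_{pn}x^n$; this is again an element of $\mathcal{R}$. *)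

From HB Require Import structures.
From mathcomp Require Import all_boot all_order all_algebra.
From mathcomp Require Import reals.
Set Implicit Arguments. Unset Strict Implicit. Unset Printing Implicit Defensive.
Import Order.TTheory GRing.Theory Num.Theory.
Local Open Scope ring_scope.

(* An element f of the space R of the paper is represented by its Taylor
   coefficient sequence a : nat -> R at 0 (a rational function regular at 0
   is determined by its Taylor expansion).  The Taylor expansion of A/B
   (with B(0) <> 0) is the unique power series a with B * a = A, i.e. *)
Definition taylor_of {R : realType} (A B : {poly R}) (a : nat -> R) : Prop :=
  forall n : nat, \sum_(i < n.+1) B`_i * a (n - i)%N = A`_n.

(* a is the Taylor sequence of some A/B with B(0) <> 0 and deg A < deg B
   (size = degree + 1; the zero polynomial A = 0 has degree -oo). *)
Definition in_calR {R : realType} (a : nat -> R) : Prop :=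
  exists A B : {poly R}, B.[0] != 0 /\ (size A < size B)%N /\ taylor_of A B a.

Definition U_op {R : realType} (p : nat) (a : nat -> R) : nat -> R :=
  fun n => a (p * n)%N.

Definition point_spec {R : realType} (p : nat) (lam : R) : Prop :=
  exists a : nat -> R, in_calR a /\ (exists n, a n != 0) /\
    (forall n, U_op p a n = lam * a n).

From HB Require Import structures.
From mathcomp Require Import all_boot all_order all_algebra fingroup perm.
From mathcomp Require Import reals.
From mathcomp Require Import boolp ring.
From mathcomp.real_closed Require Import complex.
Set Implicit Arguments.
Unset Strict Implicit.
Unset Printing Implicit Defensive.

Import Order.TTheory GRing.Theory Num.Theory.
Local Open Scope ring_scope.

(* A Taylor sequence [a] of an element of calR is a nonzero solution of a
   linear recurrence whose characteristic polynomial [c] has [c(0) <> 0].  If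
   [a(p n) = lam a(n)] with [lam <> 0], then over [R[i]] the substitution
   [X -> X^p] shows that [z |-> z^p] maps the roots of the minimal recurrence
   of [a] onto themselves, hence permutes them, so they are all [M]-th roots of
   unity with [M + 1 = p^N].  Then [a] restricted to a residue class mod [M]
   has a vanishing finite difference, and comparing the last nonzero
   difference of both sides of [a(p^N n) = lam^N a(n)] gives
   [lam^N = p^(N k)], i.e. [|lam| = p^k].  Conversely, [chi(n) n^k] is an
   eigenvector for [eps p^k] whenever [chi] is periodic with
   [chi(p n) = eps chi(n)]: take [chi = 1] ([eps = 1]), the indicator of
   [n = 1 mod p] ([eps = 0]), and [[n = 1] - [n = -1] mod p + 1] ([eps = -1],
   as [p = -1 mod p + 1]). *)

(* Choosing a preimage in [s] of each point of [s] gives an injection of the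
   finite type [seq_sub s] into itself, i.e. a permutation; its order is the
   required period. *)
Lemma iter_fixed_of_surjective (T : choiceType) (f : T -> T) (s : seq T) :
  {in s, forall z, exists2 y, y \in s & f y = z} ->
  exists2 N, (0 < N)%N & {in s, forall z, iter N f z = z}.
Proof.
move=> f_onto.
have pre_ex (x : seq_sub s) : exists y, (y \in s) && (f y == ssval x).
  by have [y ys fy] := f_onto _ (ssvalP x); exists y; rewrite ys fy eqxx.
have pre_in x : xchoose (pre_ex x) \in s by case/andP: (xchooseP (pre_ex x)).
pose pre x := SeqSub (pre_in x).
have preK x : f (ssval (pre x)) = ssval x by case/andP: (xchooseP (pre_ex x)) => _ /eqP.
have pre_inj : injective pre.
  by move=> x y eq_pre; apply: val_inj; rewrite /= -[ssval x]preK -[ssval y]preK eq_pre.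
pose sigma := perm pre_inj.
exists #[sigma]%g => [|z zs]; first exact: order_gt0.
have iterK n x : iter n f (ssval (iter n pre x)) = ssval x.
  by elim: n x => // n IHn x; rewrite [iter n.+1 pre x]iterSr iterS IHn preK.
have := iterK #[sigma]%g (SeqSub zs).
suff -> : iter #[sigma]%g pre (SeqSub zs) = SeqSub zs by [].
by rewrite -(eq_iter (permE pre_inj)) -permX expg_order perm1.
Qed.

Section PolyAction.
Variable R : comNzRingType.
Implicit Types (c d : {poly R}) (b f : nat -> R).

(* The action of [c] on sequences in which [X] acts as the shift. *)
Definition pact c b n : R := \sum_(j < size c) c`_j * b (n + j)%N.

Definition annihilates c b := forall n, pact c b n = 0.

Lemma sum_coef_widen {c N} (h : nat -> R) : (size c <= N)%N ->
  \sum_(j < size c) c`_j * h j = \sum_(j < N) c`_j * h j.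
Proof.
move=> leN; rewrite (big_ord_widen N (fun j => c`_j * h j) leN) big_mkcond.
by apply: eq_bigr => j _ /=; case: ltnP => // /(nth_default 0) ->; rewrite mul0r.
Qed.

Lemma pactE {c N} b n : (size c <= N)%N ->
  pact c b n = \sum_(j < N) c`_j * b (n + j)%N.
Proof. exact: (sum_coef_widen (fun j => b (n + j)%N)). Qed.

Lemma pact0 b n : pact 0 b n = 0.
Proof. by rewrite /pact size_poly0 big_ord0. Qed.

Lemma eq_pact {b b'} c : b =1 b' -> pact c b =1 pact c b'.
Proof. by move=> eq_b n; apply: eq_bigr => j _; rewrite eq_b. Qed.

Lemma pactD c d b n : pact (c + d) b n = pact c b n + pact d b n.
Proof.
rewrite (pactE b n (size_polyD c d)) (pactE b n (leq_maxl (size c) (size d))).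
rewrite (pactE b n (leq_maxr (size c) (size d))) -big_split /=.
by apply: eq_bigr => j _; rewrite coefD mulrDl.
Qed.

Lemma pactC k b n : pact k%:P b n = k * b n.
Proof. by rewrite (pactE b n (size_polyC_leq1 k)) big_ord1 coefC addn0. Qed.

Lemma pactMX c b n : pact (c * 'X) b n = pact c b n.+1.
Proof.
have size_cX : (size (c * 'X)%R <= (size c).+1)%N.
  by have [->|c0] := eqVneq c 0; rewrite ?mul0r ?size_poly0 // size_mulX.
rewrite (pactE b n size_cX) big_ord_recl coefMX mul0r add0r.
by apply: eq_bigr => j _; rewrite coefMX addnS.
Qed.

Lemma pactZr c k b n : pact c (fun m => k * b m) n = k * pact c b n.
Proof. by rewrite /pact mulr_sumr; apply: eq_bigr => j _; rewrite mulrCA. Qed.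

Lemma pactCM k c b n : pact (k%:P * c) b n = k * pact c b n.
Proof.
have size_kc : (size (k%:P * c)%R <= size c)%N by rewrite mul_polyC size_scale_leq.
rewrite (pactE b n size_kc) mulr_sumr; apply: eq_bigr => j _.
by rewrite coefCM mulrA.
Qed.

Lemma pactM c d b n : pact (c * d) b n = pact c (pact d b) n.
Proof.
elim/poly_ind: c n => [|c k IHc] n; first by rewrite mul0r !pact0.
by rewrite mulrDl mulrAC !pactD !pactMX IHc pactCM pactC.
Qed.

Lemma pactMXn c k b n : pact (c * 'X^k) b n = pact c b (n + k).
Proof.
elim: k n => [|k IHk] n; first by rewrite expr0 mulr1 addn0.
by rewrite exprSr mulrA pactMX IHk addSnnS.
Qed.

Lemma pactXn k b n : pact 'X^k b n = b (n + k)%N.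
Proof. by rewrite -['X^k]mul1r pactMXn -polyC1 pactC mul1r. Qed.

Lemma annihilatesM c d b : annihilates d b -> annihilates (c * d) b.
Proof.
move=> db0 n; rewrite pactM (eq_pact _ db0).
by rewrite /pact big1 // => j _; rewrite mulr0.
Qed.

Lemma pact_comp_Xn c q b n :
  pact (c \Po 'X^q) b (q * n) = pact c (fun m => b (q * m)%N) n.
Proof.
elim/poly_ind: c n => [|c k IHc] n; first by rewrite comp_poly0 !pact0.
by rewrite comp_poly_MXaddC !pactD pactMXn pactMX -mulnSr IHc !pactC.
Qed.

Definition fdiff s f n : R := f (n + s)%N - f n.

Lemma pact_fdiff M D b n : pact (('X^M - 1) ^+ D) b n = iter D (fdiff M) b n.
Proof.
elim: D n => [|D IHD] n; first by rewrite expr0 -polyC1 pactC mul1r.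
by rewrite exprS pactM (eq_pact _ IHD) -polyC1 -polyCN pactD pactXn pactC mulN1r.
Qed.

End PolyAction.

Section Reversal.
Variable R : comNzRingType.
Implicit Types (c : {poly R}) (a : nat -> R).

Definition revp d c : {poly R} := \poly_(i < d.+1) c`_(d - i).

Lemma coef_revp d c i : (revp d c)`_i = if (i <= d)%N then c`_(d - i) else 0.
Proof. by rewrite coef_poly ltnS. Qed.

Lemma revpK d c : (size c <= d.+1)%N -> revp d (revp d c) = c.
Proof.
move=> c_size; apply/polyP => i; rewrite !coef_revp leq_subr.
case: leqP => [i_le_d|d_lt_i]; first by rewrite subKn.
by rewrite nth_default // (leq_trans c_size).
Qed.

Lemma revp_at0 d c : (revp d c).[0] = c`_d.
Proof. by rewrite horner_coef0 coef_revp subn0. Qed.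

Lemma pact_revp d c a n : (size c <= d.+1)%N ->
  pact (revp d c) a n = \sum_(i < (n + d).+1) c`_i * a (n + d - i)%N.
Proof.
move=> c_size; rewrite (pactE a n (size_poly _ _)).
have c_size' : (size c <= (n + d).+1)%N by rewrite (leq_trans c_size) ?ltnS ?leq_addl.
rewrite -(sum_coef_widen (fun i => a (n + d - i)%N) c_size').
rewrite (sum_coef_widen (fun i => a (n + d - i)%N) c_size) (reindex_inj rev_ord_inj) /=.
apply: eq_bigr => j _; have j_le_d : (j <= d)%N := ltn_ord j.
by rewrite coef_revp subSS leq_subr subKn // addnBA.
Qed.

End Reversal.

Section Differences.
Variable R : comNzRingType.
Implicit Types (f chi : nat -> R).

Definition sample r s f t : R := f (r + s * t)%N.

Definition window q f n : R := \sum_(i < q) f (n + i)%N.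

Lemma fdiff1_sample r s f : fdiff 1 (sample r s f) = sample r s (fdiff s f).
Proof.
apply: funext => t.
by rewrite /fdiff /sample addn1 mulnS addnCA addnC.
Qed.

Lemma iter_fdiff1_sample k r s f :
  iter k (fdiff 1) (sample r s f) = sample r s (iter k (fdiff s) f).
Proof. by elim: k => //= k ->; rewrite fdiff1_sample. Qed.

Lemma fdiff_window q f : fdiff q f = window q (fdiff 1 f).
Proof.
apply: funext => n; rewrite /fdiff /window.
rewrite -(big_mkord xpredT (fun i => f (n + i + 1)%N - f (n + i)%N)).
under eq_bigr => i _ do rewrite addn1 -addnS.
by rewrite (telescope_sumr (fun i => f (n + i)%N)) // addn0.
Qed.

Lemma fdiff1_window q f : fdiff 1 (window q f) = window q (fdiff 1 f).
Proof.
apply: funext => n; rewrite /fdiff /window -sumrB.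
by apply: eq_bigr => i _; rewrite addnAC.
Qed.

Lemma iter_fdiff_window k q f :
  iter k (fdiff q) f = iter k (window q) (iter k (fdiff 1) f).
Proof.
have comm j g : fdiff 1 (iter j (window q) g) = iter j (window q) (fdiff 1 g).
  by elim: j => //= j IHj; rewrite fdiff1_window IHj.
by elim: k => //= k ->; rewrite fdiff_window comm.
Qed.

Lemma iter_window_const k q (x : R) :
  iter k (window q) (fun=> x) = fun=> q%:R ^+ k * x.
Proof.
elim: k => [|k /= ->]; first by apply: funext => n; rewrite mul1r.
apply: funext => n.
by rewrite /window sumr_const card_ord exprS -mulrA mulr_natl.
Qed.

Lemma iter_fdiffZ k s L f :
  iter k (fdiff s) (fun n => L * f n) = fun n => L * iter k (fdiff s) f n.
Proof.
elim: k => //= k ->; apply: funext => n.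
by rewrite /fdiff mulrBr.
Qed.

Lemma fdiff1_eq0 f : fdiff 1 f = (fun=> 0) -> f = fun=> f 0%N.
Proof.
move=> df0; apply: funext; elim=> // t IHt.
by move/(congr1 (@^~ t))/eqP: df0; rewrite /fdiff subr_eq0 addn1 IHt => /eqP.
Qed.

Lemma last_nonzero_fdiff D f :
  iter D (fdiff 1) f = (fun=> 0) -> f <> (fun=> 0) ->
  exists k, iter k (fdiff 1) f <> (fun=> 0) /\ iter k.+1 (fdiff 1) f = (fun=> 0).
Proof.
elim: D => [|D IHD] fD0 f_neq0 //.
have [fD'0|fD'_neq0] := EM (iter D (fdiff 1) f = (fun=> 0)).
  exact: IHD.
by exists D.
Qed.

Lemma iter_fdiff_sum D s j (w : 'I_j -> R) (g : 'I_j -> nat -> R) :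
  iter D (fdiff s) (fun n => \sum_(i < j) w i * g i n) =
  fun n => \sum_(i < j) w i * iter D (fdiff s) (g i) n.
Proof.
elim: D => //= D ->; apply: funext => n.
by rewrite /fdiff -sumrB; apply: eq_bigr => i _; rewrite mulrBr.
Qed.

Lemma iter_fdiff_periodic_poly m chi : (forall n, chi (n + m)%N = chi n) ->
  forall D j, (j < D)%N -> iter D (fdiff m) (fun n => chi n * n%:R ^+ j) = fun=> 0.
Proof.
move=> chi_per; elim=> // D IHD j j_lt_D.
have fdiff_chi : fdiff m (fun n => chi n * n%:R ^+ j) =
    fun n => \sum_(i < j) (m%:R ^+ (j - i) *+ 'C(j, i)) * (chi n * n%:R ^+ i).
  apply: funext => n.
  rewrite /fdiff chi_per -mulrBr natrD (addrC n%:R) exprDn big_ord_recr /=.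
  rewrite subnn expr0 mul1r binn mulr1n addrK mulr_sumr.
  by apply: eq_bigr => i _; rewrite mulrnAl mulrnAr mulrCA -mulrnAr.
rewrite iterSr fdiff_chi iter_fdiff_sum; apply: funext => n.
by rewrite big1 // => i _; rewrite IHD ?mulr0 // (leq_trans (ltn_ord i)).
Qed.

Lemma annihilates_periodic_poly m k chi : (forall n, chi (n + m)%N = chi n) ->
  annihilates (('X^m - 1) ^+ k.+1) (fun n => chi n * n%:R ^+ k).
Proof.
by move=> chi_per n; rewrite pact_fdiff (iter_fdiff_periodic_poly chi_per (ltnSn k)).
Qed.

End Differences.

Section DilationEigenvalues.
Variable R : idomainType.
Implicit Types (f b : nat -> R) (L : R).

(* If the [k]-th difference of [f] is a nonzero constant [d], that of
   [t |-> f (s + q t)] is [q ^ k * d]. *)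
Lemma dilation_eigenvalue_of_polynomial D q s L f : (0 < q)%N ->
  iter D (fdiff 1) f = (fun=> 0) -> f <> (fun=> 0) ->
  sample s q f = (fun t => L * f t) -> exists k, L = q%:R ^+ k.
Proof.
move=> q_gt0 fD0 f_neq0 f_dil.
have [k [dk_neq0 dk1_0]] := last_nonzero_fdiff fD0 f_neq0.
set d := iter k (fdiff 1) f in dk_neq0 dk1_0.
have d_const : d = fun=> d 0%N := fdiff1_eq0 dk1_0.
have d0_neq0 : d 0%N != 0 by apply/eqP => d00; apply: dk_neq0; rewrite d_const d00.
have dk_sample : iter k (fdiff 1) (sample s q f) = fun=> q%:R ^+ k * d 0%N.
  by rewrite iter_fdiff1_sample iter_fdiff_window -/d d_const iter_window_const.
exists k; apply: (mulIf d0_neq0).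
have := congr1 (@^~ 0%N) dk_sample; rewrite f_dil iter_fdiffZ /= => <-.
by rewrite -/d.
Qed.

Lemma dilation_eigenvalue_of_annihilated M D L b : (0 < M)%N ->
  annihilates (('X^M - 1) ^+ D) b -> (forall n, b (M.+1 * n)%N = L * b n) ->
  (exists n, b n != 0) -> exists k, L = M.+1%:R ^+ k.
Proof.
move=> M_gt0 b_ann b_dil [n0 bn0_neq0].
pose r := (n0 %% M)%N.
apply: (@dilation_eigenvalue_of_polynomial D M.+1 r L (sample r M b)) => //.
- rewrite iter_fdiff1_sample; apply: funext => t.
  by rewrite /sample -pact_fdiff b_ann.
- move=> /(congr1 (@^~ (n0 %/ M)%N)); rewrite /sample /r addnC mulnC -divn_eq.
  exact/eqP.
- apply: funext => t; rewrite /sample -b_dil; congr b.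
  by ring.
Qed.

End DilationEigenvalues.

Section FieldAnnihilators.
Variable F : fieldType.
Implicit Types (c g m : {poly F}) (b : nat -> F).

Lemma annihilates_dvd m g b : annihilates m b -> (m %| g)%R -> annihilates g b.
Proof. by move=> m_ann /divpK <-; apply: annihilatesM. Qed.

Lemma minimal_annihilator c b : c != 0 -> annihilates c b ->
  exists2 m, annihilates m b & forall g, annihilates g b -> (m %| g)%R.
Proof.
move: {2}(size c) (leqnn (size c)) => N; elim: N c => [|N IHN] c c_size c_neq0 c_ann.
  by move: c_neq0; rewrite -size_poly_eq0 -leqn0 c_size.
have [[g [g_ann c_ndvd_g]]|c_min] := EM (exists g, annihilates g b /\ ~~ (c %| g)%R).
  apply: (IHN (g %% c)); last 2 first.
  - by apply: contra c_ndvd_g => /eqP/modp_eq0P.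
  - move=> n; have := pactD (g %/ c * c) (g %% c) b n.
    by rewrite -divp_eq g_ann (annihilatesM _ c_ann) add0r => <-.
  by rewrite -ltnS (leq_trans (ltn_modpN0 _ c_neq0)).
exists c => // g g_ann; apply/negPn/negP => c_ndvd_g.
by apply: c_min; exists g.
Qed.

Lemma annihilates_of_comp_Xn p L c b : L != 0 ->
  (forall n, b (p * n)%N = L * b n) ->
  annihilates (c \Po 'X^p) b -> annihilates c b.
Proof.
move=> L_neq0 b_dil cp_ann n; have := pact_comp_Xn c p b n.
rewrite cp_ann (eq_pact _ b_dil) pactZr => /esym/eqP.
by rewrite mulf_eq0 (negPf L_neq0) => /eqP.
Qed.

End FieldAnnihilators.

Lemma dvdp_prod_seq (R : idomainType) (I : eqType) (s : seq I) (f g : I -> {poly R}) :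
  {in s, forall i, f i %| g i}%R -> (\prod_(i <- s) f i %| \prod_(i <- s) g i)%R.
Proof.
move=> fg; rewrite !big_seq.
by elim/big_ind2: _ => // *; apply: dvdp_mul.
Qed.

Section ClosedFieldRoots.
Variables (C : closedFieldType) (p : nat) (L : C) (b : nat -> C).
Hypotheses (p_gt1 : (1 < p)%N) (L_neq0 : L != 0).
Hypothesis b_dil : forall n, b (p * n)%N = L * b n.
Variables (m : {poly C}) (rs : seq C).
Hypotheses (m_ann : annihilates m b) (m0 : m.[0] != 0).
Hypothesis m_min : forall g, annihilates g b -> (m %| g)%R.
Hypothesis m_eq : m = lead_coef m *: \prod_(z <- rs) ('X - z%:P).

Let lead_m_neq0 : lead_coef m != 0.
Proof. by rewrite lead_coef_eq0; apply: contra m0 => /eqP ->; rewrite horner0. Qed.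

Lemma root_min_annihilator z : z \in rs -> root m z.
Proof. by move=> z_rs; rewrite m_eq rootZ ?root_prod_XsubC. Qed.

Lemma min_annihilator_roots_pth_root :
  {in rs, forall z, exists2 y, y \in rs & y ^+ p = z}.
Proof.
pose g := \prod_(y <- rs) ('X - (y ^+ p)%:P).
have g_ann : annihilates g b.
  apply: (annihilates_of_comp_Xn L_neq0 b_dil); apply: annihilates_dvd m_ann _.
  have g_comp : g \Po 'X^p = \prod_(y <- rs) ('X^p - (y ^+ p)%:P).
    rewrite rmorph_prod; apply: eq_bigr => y _.
    by rewrite rmorphB /= comp_polyX comp_polyC.
  have m_dvd : (\prod_(z <- rs) ('X - z%:P) %| \prod_(y <- rs) ('X^p - (y ^+ p)%:P))%R.
    by apply: dvdp_prod_seq => y _; rewrite dvdp_XsubCl /root !hornerE subrr.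
  by rewrite {1}m_eq dvdpZl //; rewrite -g_comp in m_dvd.
move=> z /root_min_annihilator /(root_dvdp (m_min g_ann)).
rewrite /g -(big_map (fun y => y ^+ p) xpredT (fun w => 'X - w%:P)) root_prod_XsubC.
by move=> /mapP [y y_rs ->]; exists y.
Qed.

Lemma min_annihilator_roots_of_unity :
  exists2 N, (0 < N)%N & {in rs, forall z, z ^+ (p ^ N).-1 = 1}.
Proof.
have [N N_gt0 rs_fixed] :=
  iter_fixed_of_surjective (f := fun y => y ^+ p) min_annihilator_roots_pth_root.
exists N => // z z_rs.
have z_neq0 : z != 0.
  by apply: contraNneq m0 => z0; have := root_min_annihilator z_rs; rewrite z0.
have iter_exp n : iter n (fun y => y ^+ p) z = z ^+ (p ^ n).
  by elim: n => [|n /= ->]; rewrite ?expr1 // -exprM expnSr.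
apply: (mulIf z_neq0); rewrite mul1r -exprSr prednK ?expn_gt0 ?(ltnW p_gt1) //.
by rewrite -iter_exp rs_fixed.
Qed.

Lemma dilation_eigenvalue_pow : (exists n, b n != 0) ->
  exists N k, (0 < N)%N /\ L ^+ N = (p%:R ^+ k) ^+ N.
Proof.
move=> b_neq0; have [N N_gt0 rs_unity] := min_annihilator_roots_of_unity.
have pN_gt1 : (1 < p ^ N)%N by apply: leq_ltn_trans (ltn_expl N p_gt1).
set M := (p ^ N).-1; have M_succ : M.+1 = (p ^ N)%N by rewrite prednK // ltnW.
have b_ann : annihilates (('X^M - 1) ^+ size rs) b.
  apply: annihilates_dvd m_ann _; rewrite {1}m_eq dvdpZl //.
  rewrite -iter_mulr_1 -count_predT -big_const_seq.
  by apply: dvdp_prod_seq => z z_rs; rewrite dvdp_XsubCl /root !hornerE rs_unity ?subrr.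
have b_dilN j n : b (p ^ j * n)%N = L ^+ j * b n.
  elim: j n => [|j IHj] n; first by rewrite mul1n mul1r.
  by rewrite expnSr -mulnA IHj b_dil exprSr mulrA.
have M_gt0 : (0 < M)%N by rewrite -ltnS M_succ.
have b_dilM n : b (M.+1 * n)%N = L ^+ N * b n by rewrite M_succ b_dilN.
have [k Lk] := dilation_eigenvalue_of_annihilated M_gt0 b_ann b_dilM b_neq0.
by exists N, k; split => //; rewrite Lk M_succ natrX -!exprM mulnC.
Qed.

End ClosedFieldRoots.

Lemma dilation_eigenvalue_pow_closed (C : closedFieldType) p (L : C) b c :
  (1 < p)%N -> L != 0 -> (forall n, b (p * n)%N = L * b n) ->
  c.[0] != 0 -> annihilates c b -> (exists n, b n != 0) ->
  exists N k, (0 < N)%N /\ L ^+ N = (p%:R ^+ k) ^+ N.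
Proof.
move=> p_gt1 L_neq0 b_dil c0 c_ann b_neq0.
have c_neq0 : c != 0 by apply: contraNneq c0 => ->; rewrite horner0.
have [m m_ann m_min] := minimal_annihilator c_neq0 c_ann.
have m0 : m.[0] != 0.
  apply: contraNneq c0; rewrite -(divpK (m_min c c_ann)) hornerM => ->.
  by rewrite mulr0.
have [rs m_eq] := closed_field_poly_normal m.
exact: (dilation_eigenvalue_pow p_gt1 L_neq0 b_dil m_ann m0 m_min m_eq).
Qed.

Lemma pact_map (F : fieldType) (S : comNzRingType) (f : {rmorphism F -> S}) c a n :
  pact (map_poly f c) (f \o a) n = f (pact c a n).
Proof.
rewrite /pact size_map_poly rmorph_sum; apply: eq_bigr => i _.
by rewrite coef_map rmorphM.
Qed.

Lemma eqrXn_pm (R : realDomainType) N (x y : R) :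
  (0 < N)%N -> 0 <= y -> x ^+ N = y ^+ N -> x = y \/ x = - y.
Proof.
move=> N_gt0 y_ge0 xy; have norm_x : `|x| = y.
  by apply/eqP; rewrite -(eqrXn2 N_gt0) ?normr_ge0 // -normrX xy ger0_norm ?exprn_ge0.
have [x_ge0|x_lt0] := lerP 0 x; first by left; rewrite -norm_x ger0_norm.
by right; rewrite -norm_x ltr0_norm ?opprK.
Qed.

Section RealSequences.
Variable R : realType.
Implicit Types (a chi : nat -> R) (c : {poly R}).

Lemma in_calR_annihilated a : in_calR a -> exists c, c.[0] != 0 /\ annihilates c a.
Proof.
move=> [A [B [B0 [AB_size AB_taylor]]]].
have B_neq0 : B != 0 by apply: contraNneq B0 => ->; rewrite horner0.
set d := (size B).-1; have B_size : size B = d.+1 by rewrite prednK // size_poly_gt0.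
exists (revp d B); split.
  by rewrite revp_at0; have : lead_coef B != 0 by rewrite lead_coef_eq0.
move=> n; rewrite pact_revp ?B_size // AB_taylor nth_default //.
by rewrite (leq_trans _ (leq_addl n d)) // -ltnS -B_size.
Qed.

Lemma annihilated_in_calR a c : c.[0] != 0 -> annihilates c a -> in_calR a.
Proof.
move=> c0 c_ann.
have c_neq0 : c != 0 by apply: contraNneq c0 => ->; rewrite horner0.
set d := (size c).-1; have c_size : size c = d.+1 by rewrite prednK // size_poly_gt0.
pose B := revp d c; have B_rev : revp d B = c by rewrite revpK ?c_size.
pose conv n := \sum_(i < n.+1) B`_i * a (n - i)%N.
have conv_eq0 n : (d <= n)%N -> conv n = 0.
  by move=> d_le_n; rewrite /conv -(subnK d_le_n) -pact_revp ?size_poly // B_rev c_ann.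
exists (\poly_(i < d) conv i), B; split; [|split].
- by rewrite revp_at0; have : lead_coef c != 0 by rewrite lead_coef_eq0.
- have B_size : size B = d.+1 by rewrite size_poly_eq // subnn -horner_coef0.
  by rewrite B_size ltnS size_poly.
by move=> n; rewrite coef_poly; case: ltnP => // /conv_eq0.
Qed.

Lemma in_calR_periodic_poly m k chi : (0 < m)%N ->
  (forall n, chi (n + m)%N = chi n) -> in_calR (fun n => chi n * n%:R ^+ k).
Proof.
move=> m_gt0 chi_per.
apply: (annihilated_in_calR _ (annihilates_periodic_poly k chi_per)).
rewrite horner_exp !hornerE expr0n (gtn_eqF m_gt0) sub0r.
by rewrite expf_neq0 // oppr_eq0 oner_eq0.
Qed.

Lemma point_spec_periodic_poly p m k (eps : R) chi : (0 < m)%N ->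
  (forall n, chi (n + m)%N = chi n) -> (forall n, chi (p * n)%N = eps * chi n) ->
  chi 1%N != 0 -> point_spec p (eps * p%:R ^+ k).
Proof.
move=> m_gt0 chi_per chi_dil chi1_neq0.
exists (fun n => chi n * n%:R ^+ k).
split; first exact: (in_calR_periodic_poly k m_gt0 chi_per).
split; first by exists 1%N; rewrite mulr1n expr1n mulr1.
by move=> n; rewrite /U_op chi_dil natrM exprMn; ring.
Qed.

Lemma point_spec_eigenvalue_pow p (lam : R) : (1 < p)%N ->
  point_spec p lam -> lam != 0 ->
  exists N k, (0 < N)%N /\ lam ^+ N = (p%:R ^+ k) ^+ N.
Proof.
move=> p_gt1 [a [a_calR [a_neq0 a_dil]]] lam_neq0.
have [c [c0 c_ann]] := in_calR_annihilated a_calR.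
pose f := real_complex R.
have f_lam : f lam != 0 by rewrite fmorph_eq0.
have fa_dil n : (f \o a) (p * n)%N = f lam * (f \o a) n.
  by rewrite /= -rmorphM -[a (p * n)%N]/(U_op p a n) a_dil.
have fc0 : (map_poly f c).[0] != 0 by rewrite horner_map fmorph_eq0.
have fc_ann : annihilates (map_poly f c) (f \o a).
  by move=> n; rewrite pact_map c_ann rmorph0.
have fa_neq0 : exists n, (f \o a) n != 0.
  by have [n an_neq0] := a_neq0; exists n; rewrite /= fmorph_eq0.
have [N [k [N_gt0 lamN]]] :=
  dilation_eigenvalue_pow_closed p_gt1 f_lam fa_dil fc0 fc_ann fa_neq0.
exists N, k; split => //; apply: (fmorph_inj f).
by rewrite !rmorphXn rmorph_nat.
Qed.

End RealSequences.

Definition alt_char (R : nzRingType) p n : R :=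
  (n == 1 %[mod p.+1])%:R - (n == p %[mod p.+1])%:R.

Lemma mul_eqn_mod p a b : (p * a == b %[mod p.+1]) = (a + b == 0 %[mod p.+1]).
Proof.
rewrite -(eqn_modDr a) [(p * a + a)%N]addnC -mulSn modnMr eq_sym mod0n.
by rewrite [(b + a)%N]addnC.
Qed.

Lemma alt_char_mul (R : nzRingType) p n : alt_char R p (p * n) = - alt_char R p n.
Proof.
have eq_p : (n + 1 == 0 %[mod p.+1]) = (n == p %[mod p.+1]).
  by rewrite -(eqn_modDr 1 n p) !addn1 modnn mod0n.
have eq_1 : (n + p == 0 %[mod p.+1]) = (n == 1 %[mod p.+1]).
  by rewrite -(eqn_modDr p n 1) add1n modnn mod0n.
by rewrite /alt_char !mul_eqn_mod eq_p eq_1 opprB.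
Qed.

Lemma alt_char1 (R : nzRingType) p : (1 < p)%N -> alt_char R p 1 = 1.
Proof.
move=> p_gt1; rewrite /alt_char eqxx !modn_small ?ltnS ?(ltnW p_gt1) //.
by rewrite eq_sym (gtn_eqF p_gt1) subr0.
Qed.

Theorem mainTheorem1 (R : realType) (p : nat) (hp : (1 < p)%N) (lam : R) :
  point_spec p lam <->
  (lam = 0 \/ exists k : nat, lam = (p%:R) ^+ k \/ lam = - (p%:R) ^+ k).
Proof.
have p_gt0 : (0 < p)%N := ltnW hp.
split.
  move=> spec; have [->|lam_neq0] := eqVneq lam 0; [by left | right].
  have [N [k [N_gt0 lamN]]] := point_spec_eigenvalue_pow hp spec lam_neq0.
  by exists k; apply: eqrXn_pm N_gt0 _ lamN; apply/exprn_ge0/ler0n.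
move=> [->|[k [->|->]]].
- rewrite -(mul0r (p%:R ^+ 0)).
  apply: (@point_spec_periodic_poly R p p 0 0 (fun n => (n == 1 %[mod p])%:R) p_gt0).
  + by move=> n; rewrite modnDr.
  + by move=> n; rewrite modnMr modn_small // mul0r.
  + by rewrite eqxx oner_eq0.
- rewrite -[_ ^+ k]mul1r; apply: (@point_spec_periodic_poly R p 1 k 1 (fun=> 1)) => //.
  + by move=> n; rewrite mul1r.
  + exact: oner_neq0.
- rewrite -mulN1r.
  apply: (@point_spec_periodic_poly R p p.+1 k (-1) (alt_char R p)) => //.
  + by move=> n; rewrite /alt_char !modnDr.
  + by move=> n; rewrite alt_char_mul mulN1r.
  + by rewrite alt_char1 // oner_eq0.
Qed.
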